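(* Let $a$ be a positive integer and let $T_{a,a} = \{C_{i,1} : 1 \le i \le 2a+1\} \cup \{C_{a+1,j} : 2 \le j \le a+1\}$, of size $n = 3a+1$. Then on the $n \times n$ board, $\mathrm{cp}_{\mathrm{free}}(T_{a,a}) = 2$.
   Context: For integers $i,j$, $C_{i,j}$ denotes the unit square cell in column $i$ and row $j$ of the integer grid (columns numbered left to right, rows numbered top to bottom). A polyomino is a finite set of cells; its size is its number of cells. For a polyomino $\mathcal{P}$ of size $n$ the board is $\mathbb{B} = \{C_{i,j} : 1 \le i,j \le n\}$. The shift of $\mathcal{P}$ by integers $(c,d)$ is $\mathcal{P}+(c,d) = \{C_{x+c,y+d} : C_{x,y} \in \mathcal{P}\}$. For positive integers $a,b$ and $T_{a,b} = \{C_{i,1} : 1 \le i \le 2a+1\} \cup \{C_{a+1,j} : 2 \le j \le b+1\}$, its rotations by $90^\circ,180^\circ,270^\circ$ clockwise are $TR_{a,b} = \{C_{b+1,i} : 1 \le i \le 2a+1\} \cup \{C_{j,a+1} : 1 \le j \le b\}$, $TR^2_{a,b} = \{C_{i,b+1} : 1 \le i \le 2a+1\} \cup \{C_{a+1,j} : 1 \le j \le b\}$, $TR^3_{a,b} = \{C_{1,i} : 1 \le i \le 2a+1\} \cup \{C_{j,a+1} : 2 \le j \le b+1\}$. A free copy of $T_{a,b}$ is any shift of one of these four. A set of polyominoes is a valid arrangement if each is contained in $\mathbb{B}$ and they are pairwise disjoint. A free packing of $\mathcal{P}$ is a set of free copies of $\mathcal{P}$ forming a valid arrangement such that adding any further free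 copy of $\mathcal{P}$ yields an invalid arrangement. The clumsy free packing number $\mathrm{cp}_{\mathrm{free}}(\mathcal{P})$ is the minimum number of polyominoes in a free packing of $\mathcal{P}$ on the $n \times n$ board. *)

(* cells are pairs of integers (column, row). *)
From Stdlib Require Import ZArith List Lia.
Open Scope Z_scope.

Definition cell := (Z * Z)%type.

Definition cellset := cell -> Prop.

(* T_{a,b} and its rotations by 90, 180, 270 degrees clockwise. *)
Definition T_ab (a b : Z) : cellset := fun z =>
  (1 <= fst z <= 2*a+1 /\ snd z = 1) \/ (fst z = a+1 /\ 2 <= snd z <= b+1).
Definition TR_ab (a b : Z) : cellset := fun z =>
  (fst z = b+1 /\ 1 <= snd z <= 2*a+1) \/ (1 <= fst z <= b /\ snd z = a+1).
Definition TR2_ab (a b : Z) : cellset := fun z =>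
  (1 <= fst z <= 2*a+1 /\ snd z = b+1) \/ (fst z = a+1 /\ 1 <= snd z <= b).
Definition TR3_ab (a b : Z) : cellset := fun z =>
  (fst z = 1 /\ 1 <= snd z <= 2*a+1) \/ (2 <= fst z <= b+1 /\ snd z = a+1).

Definition rotT (a b : Z) (k : nat) : cellset :=
  match k with
  | 0%nat => T_ab a b
  | 1%nat => TR_ab a b
  | 2%nat => TR2_ab a b
  | _ => TR3_ab a b
  end.

Definition shift (P : cellset) (c d : Z) : cellset :=
  fun z => P (fst z - c, snd z - d).

Definition free_copy (a b : Z) (Q : cellset) : Prop :=
  exists (k : nat) (c d : Z), (k < 4)%nat /\
    forall z, Q z <-> shift (rotT a b k) c d z.

Definition board (n : Z) : cellset := fun z =>
  1 <= fst z <= n /\ 1 <= snd z <= n.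

Definition subset_cells (P Q : cellset) : Prop := forall z, P z -> Q z.
Definition disjoint_cells (P Q : cellset) : Prop := forall z, ~ (P z /\ Q z).

Definition empty_cells : cellset := fun _ => False.

(* A family of polyominoes (listed; distinct positions are distinct members)
   is a valid arrangement on the n x n board: each is contained in the board
   and they are pairwise disjoint. *)
Definition valid_arrangement (n : Z) (L : list cellset) : Prop :=
  (forall Q, In Q L -> subset_cells Q (board n)) /\
  (forall i j : nat, (i < j)%nat -> (j < length L)%nat ->
      disjoint_cells (nth i L empty_cells) (nth j L empty_cells)).

Definition free_packing (a b n : Z) (L : list cellset) : Prop :=
  (forall Q, In Q L -> free_copy a b Q) /\
  valid_arrangement n L /\
  (forall Q, free_copy a b Q -> ~ valid_arrangement n (Q :: L)).

Definition cp_free_eq (a b n : Z) (m : nat) : Prop :=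
  (exists L, free_packing a b n L /\ length L = m) /\
  (forall L, free_packing a b n L -> (m <= length L)%nat).

(** Two upright copies suffice: one with its bar on row [a] over columns
    [1..2a+1] and its stem down column [a+1] to row [2a], the other with its
    bar on row [2a+1] over columns [a+1..3a+1] and its stem down column
    [2a+1] to the bottom edge.  Every placement of a further copy either
    reaches row [a] within the first [2a+1] columns, crosses the stem in
    column [a+1], or reaches row [2a+1] right of column [a].

    One copy never suffices: a placed copy spans only [a+1] consecutive rows
    (or columns).  Either it avoids the [a+1] rows along one edge, where a
    second copy then fits, or it lies within [2a+1] rows from that edge, and
    a copy laid against the opposite edge can meet it only stem tip to stem
    tip, which shifting it by one cell avoids. *)

From Pilot Require Import Defs.
From Stdlib Require Import ZArith List Lia.
Open Scope Z_scope.
(* Re-import so that [shift] is the cell shift, not [Zpower.shift]. *)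
Import Defs ListNotations.

Ltac unfold_cells :=
  unfold shift, rotT, T_ab, TR_ab, TR2_ab, TR3_ab, board,
    subset_cells, disjoint_cells in *; cbn [fst snd] in *.

Ltac solve_cells := unfold_cells; intros [x y]; cbn [fst snd]; lia.

Lemma free_copy_shift_rotT (a b c d : Z) (k : nat) :
  (k < 4)%nat -> free_copy a b (shift (rotT a b k) c d).
Proof. intros hk; exists k, c, d; split; [exact hk | tauto]. Qed.

Lemma valid_arrangement_singleton (n : Z) (Q : cellset) :
  subset_cells Q (board n) -> valid_arrangement n [Q].
Proof.
  intros hQ; split.
  - now intros R [<-|[]].
  - cbn; lia.
Qed.

Lemma valid_arrangement_pair (n : Z) (P Q : cellset) :
  subset_cells P (board n) -> subset_cells Q (board n) -> disjoint_cells P Q ->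
  valid_arrangement n [P; Q].
Proof.
  intros hP hQ hPQ; split.
  - now intros R [<-|[<-|[]]].
  - intros [|i] [|[|j]] hij hj; cbn in *; [lia | exact hPQ | lia ..].
Qed.

Lemma valid_arrangement_cons_inv (n : Z) (Q : cellset) (L : list cellset) :
  valid_arrangement n (Q :: L) ->
  subset_cells Q (board n) /\ (forall R, In R L -> disjoint_cells Q R).
Proof.
  intros [hsub hdisj]; split; [now apply hsub; left|].
  intros R hR; destruct (In_nth L R empty_cells hR) as [j [hj <-]].
  apply (hdisj 0%nat (S j)); cbn; lia.
Qed.

Section FreePackings.

Variables a b n : Z.

Definition fits (k : nat) (c d : Z) : Prop :=
  subset_cells (shift (rotT a b k) c d) (board n).

Lemma free_packing_intro (L : list cellset) :
  (forall Q, In Q L -> free_copy a b Q) -> valid_arrangement n L ->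
  (forall k c d, (k < 4)%nat -> fits k c d ->
     exists R z, In R L /\ shift (rotT a b k) c d z /\ R z) ->
  free_packing a b n L.
Proof.
  intros hcopies hvalid hblock; split; [exact hcopies | split; [exact hvalid|]].
  intros Q [k [c [d [hk hQ]]]] hQL.
  destruct (valid_arrangement_cons_inv _ _ _ hQL) as [hsub hdisj].
  destruct (hblock k c d hk) as [R [z [hR [hz hRz]]]].
  - now intros z hz; apply hsub, hQ.
  - now apply (hdisj R hR z); split; [apply hQ|].
Qed.

Lemma free_packing_nonempty (k : nat) (c d : Z) :
  (k < 4)%nat -> fits k c d -> ~ free_packing a b n [].
Proof.
  intros hk hfit [_ [_ hmax]].
  apply (hmax _ (free_copy_shift_rotT a b c d k hk)).
  now apply valid_arrangement_singleton.
Qed.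

Lemma free_packing_not_singleton :
  (forall k c d, (k < 4)%nat -> fits k c d ->
     exists k' c' d', (k' < 4)%nat /\ fits k' c' d' /\
       disjoint_cells (shift (rotT a b k') c' d') (shift (rotT a b k) c d)) ->
  forall Q, ~ free_packing a b n [Q].
Proof.
  intros hroom Q [hcopy [hvalid hmax]].
  destruct (hcopy Q (or_introl eq_refl)) as [k [c [d [hk hQ]]]].
  destruct (valid_arrangement_cons_inv _ _ _ hvalid) as [hsub _].
  destruct (hroom k c d hk) as [k' [c' [d' [hk' [hfit' hdisj']]]]].
  - now intros z hz; apply hsub, hQ.
  - apply (hmax _ (free_copy_shift_rotT a b c' d' k' hk')).
    apply valid_arrangement_pair; [exact hfit' | exact hsub |].
    now intros z [hz hQz]; apply (hdisj' z); split; [|apply hQ].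
Qed.

Definition rot_width (k : nat) : Z := if Nat.even k then 2*a+1 else b+1.
Definition rot_height (k : nat) : Z := if Nat.even k then b+1 else 2*a+1.

Hypotheses (ha : 0 <= a) (hb : 0 <= b).

Lemma fits_iff (k : nat) (c d : Z) : (k < 4)%nat ->
  fits k c d <-> 0 <= c <= n - rot_width k /\ 0 <= d <= n - rot_height k.
Proof.
  unfold fits, rot_width, rot_height.
  intros hk; destruct k as [|[|[|[|k]]]]; try lia; cbn [Nat.even];
    (split; [intros hfit | intros ?; solve_cells]).
  - pose proof (hfit (c+1, d+1)); pose proof (hfit (c+2*a+1, d+1));
      pose proof (hfit (c+a+1, d+b+1)); unfold_cells; lia.
  - pose proof (hfit (c+b+1, d+1)); pose proof (hfit (c+b+1, d+2*a+1));
      pose proof (hfit (c+1, d+a+1)); unfold_cells; lia.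
  - pose proof (hfit (c+1, d+b+1)); pose proof (hfit (c+2*a+1, d+b+1));
      pose proof (hfit (c+a+1, d+1)); unfold_cells; lia.
  - pose proof (hfit (c+1, d+1)); pose proof (hfit (c+1, d+2*a+1));
      pose proof (hfit (c+b+1, d+a+1)); unfold_cells; lia.
Qed.

End FreePackings.

Ltac fits_arith := unfold rot_width, rot_height; cbn [Nat.even]; lia.

Ltac place k c d :=
  exists k, c, d;
  split; [lia | split; [apply fits_iff; fits_arith | solve_cells]].

Lemma fitting_copy_has_disjoint_companion (a : Z) (k : nat) (c d : Z) :
  1 <= a -> (k < 4)%nat -> fits a a (3*a+1) k c d ->
  exists k' c' d', (k' < 4)%nat /\ fits a a (3*a+1) k' c' d' /\
    disjoint_cells (shift (rotT a a k') c' d') (shift (rotT a a k) c d).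
Proof.
  intros ha hk hfit; apply fits_iff in hfit; try lia.
  destruct k as [|[|[|[|k]]]]; try lia; unfold rot_width, rot_height in hfit;
    cbn [Nat.even] in hfit.
  - destruct (Z_le_gt_dec (a+1) d); [place 0%nat 0 0|].
    destruct (Z.eq_dec c 0); [place 2%nat 1 (2*a) | place 2%nat 0 (2*a)].
  - destruct (Z_le_gt_dec a c); [|place 1%nat (2*a) 0].
    destruct (Z.eq_dec d 0); [place 3%nat 0 1 | place 3%nat 0 0].
  - destruct (Z_le_gt_dec a d); [|place 2%nat 0 (2*a)].
    destruct (Z.eq_dec c 0); [place 0%nat 1 0 | place 0%nat 0 0].
  - destruct (Z_le_gt_dec c a); [|place 3%nat 0 0].
    destruct (Z.eq_dec d 0); [place 1%nat (2*a) 1 | place 1%nat (2*a) 0].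
Qed.

Definition T_upper_left (a : Z) : cellset := shift (rotT a a 0) 0 (a-1).
Definition T_lower_right (a : Z) : cellset := shift (rotT a a 0) a (2*a).

Ltac hit z := exists z; unfold T_upper_left, T_lower_right; unfold_cells; lia.

Lemma fitting_copy_meets_T_pair (a : Z) (k : nat) (c d : Z) :
  1 <= a -> (k < 4)%nat -> fits a a (3*a+1) k c d ->
  exists z, shift (rotT a a k) c d z /\ (T_upper_left a z \/ T_lower_right a z).
Proof.
  intros ha hk hfit; apply fits_iff in hfit; try lia.
  destruct k as [|[|[|[|k]]]]; try lia; unfold rot_width, rot_height in hfit;
    cbn [Nat.even] in hfit.
  - destruct (Z_le_gt_dec d (a-2)); [hit (c+a+1, a)|].
    destruct (Z.eq_dec d (a-1)); [hit (a+1, a)|].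
    destruct (Z_le_gt_dec d (2*a-1)); [hit (a+1, d+1) | hit (2*a+1, 2*a+1)].
  - hit (c+a+1, 2*a+1).
  - destruct (Z_le_gt_dec d (a-1)); [hit (a+1, d+a+1) | hit (2*a+1, d+a+1)].
  - destruct (Z_le_gt_dec a c); [hit (c+1, 2*a+1)|].
    destruct (Z_le_gt_dec d (a-1)); [hit (c+1, a) | hit (c+a+1, 2*a+1)].
Qed.

Lemma T_pair_free_packing (a : Z) :
  1 <= a -> free_packing a a (3*a+1) [T_upper_left a; T_lower_right a].
Proof.
  intros ha; apply free_packing_intro.
  - intros Q [<-|[<-|[]]]; apply free_copy_shift_rotT; lia.
  - apply valid_arrangement_pair; unfold T_upper_left, T_lower_right; solve_cells.
  - intros k c d hk hfit.
    destruct (fitting_copy_meets_T_pair a k c d ha hk hfit) as [z [hz [hU|hL]]].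
    + exists (T_upper_left a), z; cbn; tauto.
    + exists (T_lower_right a), z; cbn; tauto.
Qed.

Theorem theorem8 (a : Z) (ha : 1 <= a) :
  cp_free_eq a a (3*a+1) 2%nat.
Proof.
  split.
  - exists [T_upper_left a; T_lower_right a].
    split; [exact (T_pair_free_packing a ha) | reflexivity].
  - intros [|Q [|R L]] hpack; cbn; try lia; exfalso.
    + apply (free_packing_nonempty a a (3*a+1) 0 0 0); [lia | | exact hpack].
      apply fits_iff; fits_arith.
    + apply (free_packing_not_singleton a a (3*a+1)) with Q; [|exact hpack].
      intros k c d hk hfit; now apply fitting_copy_has_disjoint_companion.
Qed.
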